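(* Let $n,T$ be positive integers, let $\Theta\subseteq\mathbb{R}^n$ be a closed convex set, and let $c^*\in\Theta$. For $t=1,\dots,T$ let $X_t\subseteq\mathbb{R}^n$ be non-empty and compact, and assume the agent's action $x_t\in X_t$ satisfies $x_t\in\arg\max_{x\in X_t}\langle c^*,x\rangle$. Assume: the $\ell_2$-diameter of $\Theta$ is at most $D>0$; the $\ell_2$-diameter of each $X_t$ is at most $K>0$; and there is $B>0$ with $\max\{\langle c-c',x-x'\rangle : c,c'\in\Theta,\ x,x'\in X_t\}\le B$ for all $t$. Let $\hat c_1,\dots,\hat c_T\in\Theta$ be the outputs of Online Newton Step (ONS, described in the context) run on $\Theta$ with the loss functions $$\ell^\eta_t(c)\coloneqq -\eta\langle \hat c_t-c,\hat x_t-x_t\rangle+\eta^2\langle \hat c_t-c,\hat x_t-x_t\rangle^2\qquad (c\in\Theta),$$ where $\hat x_t\in\arg\max_{x\in X_t}\langle \hat c_t,x\rangle$ and $\eta=\frac{1}{5B}$. Then $$R^{c^*}_T\coloneqq\sum_{t=1}^T\langle c^*,x_t-\hat x_t\rangle\ \le\ \tilde R^{c^*}_T\coloneqq\sum_{t=1}^T\langle \hat c_t-c^*,\hat x_t-x_t\rangle\ =\ O\!\left(Bn\ln\!\left(\frac{DKT}{Bn}\right)\right),$$ where the $O$ hides an absolute constant.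
   Context: Online Newton Step (ONS) on a closed convex set $\mathcal{W}\subseteq\mathbb{R}^n$ of $\ell_2$-diameter at most $W$, applied to differentiable losses $q_1,\dots,q_T$, with parameter $\gamma>0$: set $\varepsilon=\frac{n}{W^2\gamma^2}$, $A_0=\varepsilon I_n$, pick any $w_1\in\mathcal{W}$; for $t=1,\dots,T$: play $w_t$, observe $q_t$, set $A_t=A_{t-1}+\nabla q_t(w_t)\nabla q_t(w_t)^\top$ and $w_{t+1}=\arg\min_{w\in\mathcal{W}}\|w_t-\frac1\gamma A_t^{-1}\nabla q_t(w_t)-w\|_{A_t}^2$, where $\|y\|_A=\sqrt{y^\top Ay}$. In this theorem $\mathcal{W}=\Theta$, $W=D$, $w_t=\hat c_t$, $q_t=\ell^\eta_t$ (note $\nabla\ell^\eta_t(c)=\eta(1-2\eta\langle\hat x_t-x_t,\hat c_t-c\rangle)(\hat x_t-x_t)$), and $\gamma=\frac{1}{(1+2\eta B)^2}=\frac{25}{49}$. The learner chooses $\hat c_t$ before observing $(X_t,x_t)$; after round $t$ it observes $(X_t,x_t)$. *)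

From HB Require Import structures.
From mathcomp Require Import all_boot all_order all_algebra.
From mathcomp Require Import all_classical all_reals all_analysis.
Set Implicit Arguments. Unset Strict Implicit. Unset Printing Implicit Defensive.
Import Order.TTheory GRing.Theory Num.Theory.
Import numFieldNormedType.Exports.
Local Open Scope ring_scope.
Local Open Scope classical_set_scope.

Section Defs.
Context {R : realType} {n : nat}.
Local Notation vec := 'rV[R]_n.

Definition dotp (u v : vec) : R := (u *m v^T) 0 0.
Definition norm2 (u : vec) : R := Num.sqrt (dotp u u).
Definition sqnormA (A : 'M[R]_n) (y : vec) : R := (y *m A *m y^T) 0 0.

Definition diam_le (S : set vec) (D : R) : Prop :=
  forall u v, S u -> S v -> norm2 (u - v) <= D.

Definition is_argmax (X : set vec) (c x : vec) : Prop :=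
  X x /\ forall y, X y -> dotp c y <= dotp c x.

Definition ONS_A (eps : R) (grad : nat -> vec -> vec) (w : nat -> vec) (t : nat)
  : 'M[R]_n :=
  eps%:M + \sum_(1 <= s < t.+1) ((grad s (w s))^T *m grad s (w s)).

Definition is_ONS (W : set vec) (Wd gamma : R) (grad : nat -> vec -> vec)
    (T : nat) (w : nat -> vec) : Prop :=
  let eps := n%:R / (Wd ^+ 2 * gamma ^+ 2) in
  W (w 1%N) /\
  forall t : nat, (1 <= t < T)%N ->
    let A := ONS_A eps grad w t in
    let y := w t - gamma^-1 *: (grad t (w t) *m invmx A) in
    W (w t.+1) /\
    forall v, W v -> sqnormA A (y - w t.+1) <= sqnormA A (y - v).

Definition loss_eta (eta : R) (chat_t xhat_t x_t : vec) (c : vec) : R :=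
  - eta * dotp (chat_t - c) (xhat_t - x_t)
  + eta ^+ 2 * (dotp (chat_t - c) (xhat_t - x_t)) ^+ 2.

Definition grad_loss_eta (eta : R) (chat_t xhat_t x_t : vec) (c : vec) : vec :=
  (eta * (1 - 2 * eta * dotp (xhat_t - x_t) (chat_t - c))) *: (xhat_t - x_t).

End Defs.

From HB Require Import structures.
From mathcomp Require Import all_boot all_order all_algebra.
From mathcomp Require Import all_classical all_reals all_analysis.
From mathcomp Require Import ring lra.
Set Implicit Arguments. Unset Strict Implicit. Unset Printing Implicit Defensive.
Import Order.TTheory GRing.Theory Num.Theory.
Import numFieldNormedType.Exports.
Local Open Scope ring_scope.

(* Since x_t maximizes <c*, .> and xhat_t maximizes <chat_t, .> over X_t, each regret term
   <c*, x_t - xhat_t> is at most the surrogate term r_t = <chat_t - c*, xhat_t - x_t>, which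
   lies in [0, B].  At the played point chat_t the gradient of l^eta_t is
   g_t = eta (xhat_t - x_t), so <chat_t - c*, g_t> = eta r_t.  The Online Newton Step analysis
   (the generalized projection in the A_t-norm does not increase the distance to c*, and the
   resulting one-step inequalities telescope) gives
     2 eta sum_t r_t <= n / gamma + gamma eta^2 sum_t r_t^2 + gamma^-1 sum_t g_t A_t^-1 g_t^T,
   and the elliptical potential bound
     sum_t g_t A_t^-1 g_t^T <= ln det A_T - ln det A_0 <= n ln (1 + sum_t |g_t|^2 / (n eps))
   follows from the matrix determinant lemma, Hadamard's inequality and AM-GM on the diagonal
   of A_T.  As r_t <= B and eta B = 1/5, the quadratic term is absorbed by the left-hand side,
   and the logarithm is at most 3 ln (DKT / (Bn)) because DKT / (Bn) >= 2. *)

Lemma det_1_add_mul (F : comNzRingType) n (u : 'cV[F]_n) (v : 'rV[F]_n) :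
  \det (1%:M + u *m v) = 1 + (v *m u) 0 0.
Proof.
pose M := block_mx 1%:M (- u) v (1%:M : 'M[F]_1).
have M_lower : M = block_mx 1%:M 0 v 1%:M *m block_mx 1%:M (- u) 0 (1%:M + v *m u).
  by rewrite mulmx_block !mul1mx !mulmx1 !mul0mx ?mulmx0 !addr0 ?add0r mulmxN addrC addrK.
have M_upper : M = block_mx (1%:M + u *m v) (- u) 0 1%:M *m block_mx 1%:M 0 v 1%:M.
  by rewrite mulmx_block !mul1mx !mulmx1 !mul0mx ?mulmx0 ?addr0 ?add0r mulNmx addrK.
have := congr1 determinant M_lower; rewrite {1}M_upper.
rewrite !det_mulmx !det_lblock !det_ublock !det1 !mul1r !mulr1 => ->.
by rewrite det_mx11 !mxE.
Qed.

Section PositiveDefinite.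
Variable R : realFieldType.

Definition posdefmx n (A : 'M[R]_n) :=
  forall v : 'rV_n, v != 0 -> 0 < (v *m A *m v^T) 0 0.

Lemma posdefmx_diag_gt0 n (A : 'M[R]_n) i : posdefmx A -> 0 < A i i.
Proof.
move=> pdA; have := pdA (delta_mx 0 i).
rewrite -rowE trmx_delta -colE !mxE; apply.
by apply/negP => /eqP/matrixP/(_ 0 i)/eqP; rewrite !mxE !eqxx oner_eq0.
Qed.

Section Schur.
Variables (n : nat) (A : 'M[R]_(1 + n)).
Hypotheses (symA : A^T = A) (pdA : posdefmx A).

Let a := A 0 0.
Let a_gt0 : 0 < a. Proof. exact: posdefmx_diag_gt0. Qed.

Definition schur1 := drsubmx A - a^-1 *: (dlsubmx A *m ursubmx A).

Let ulsubmxE : ulsubmx A = a%:M.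
Proof. by rewrite [LHS]mx11_scalar !mxE; congr (A _ _)%:M; apply/val_inj. Qed.

Let dlsubmxE : dlsubmx A = (ursubmx A)^T.
Proof. by rewrite trmx_ursub symA. Qed.

Lemma det_schur1 : \det A = a * \det schur1.
Proof.
have factor :
    A = block_mx 1%:M 0 (a^-1 *: dlsubmx A) 1%:M *m block_mx a%:M (ursubmx A) 0 schur1.
  rewrite mulmx_block !mul1mx !mul0mx ?mulmx0 ?addr0 ?add0r.
  rewrite -!scalemxAl mul_mx_scalar scalerA mulVf ?gt_eqF // scale1r.
  by rewrite /schur1 addrC subrK -ulsubmxE submxK.
have := congr1 determinant factor.
by rewrite det_mulmx det_lblock det_ublock !det1 !mul1r det_scalar1.
Qed.

Lemma schur1_sym : schur1^T = schur1.
Proof.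
rewrite /schur1 linearB /= linearZ /= trmx_mul dlsubmxE trmxK.
by rewrite trmx_drsub symA.
Qed.

Lemma schur1_posdef : posdefmx schur1.
Proof.
move=> v v_neq0; pose p : 'rV[R]_1 := - a^-1 *: (v *m dlsubmx A).
have pv_neq0 : row_mx p v != 0 by rewrite row_mx_eq0 negb_and v_neq0 orbT.
have := pdA pv_neq0; congr (0 < _ 0 0).
rewrite -{1}(submxK A) ulsubmxE mul_row_block.
rewrite mul_mx_scalar scalerA mulrN mulfV ?gt_eqF // scaleN1r addNr.
rewrite tr_row_mx mul_row_col mul0mx add0r /schur1 mulmxBr mulmxBl mulmxDl addrC.
by rewrite /p scaleNr !mulNmx -!scalemxAl -scalemxAr -scalemxAl !mulmxA.
Qed.

Lemma schur1_diag_le i : schur1 i i <= A (rshift 1 i) (rshift 1 i).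
Proof.
rewrite /schur1 !mxE big_ord1 !mxE gerBl mulr_ge0 ?invr_ge0 ?(ltW a_gt0) //.
by rewrite -[in X in _ * X]symA mxE -expr2 sqr_ge0.
Qed.

End Schur.

Lemma hadamard n (A : 'M[R]_n) : A^T = A -> posdefmx A ->
  0 < \det A /\ \det A <= \prod_i A i i.
Proof.
elim: n A => [|n IHn] A symA pdA; first by rewrite det_mx00 big_ord0 ltr01.
have a_gt0 : 0 < A 0 0 := posdefmx_diag_gt0 0 pdA.
have [S_gt0 S_le] := IHn _ (schur1_sym symA) (schur1_posdef pdA).
rewrite (det_schur1 pdA) big_ord_recl; split; first exact: mulr_gt0.
rewrite ler_pM2l //; apply: le_trans S_le _.
apply: ler_prod => i _; rewrite ltW ?(posdefmx_diag_gt0 _ (schur1_posdef pdA)) //=.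
have -> : lift ord0 i = rshift 1 i by apply/val_inj.
exact: schur1_diag_le.
Qed.

End PositiveDefinite.

Section InnerProduct.
Variables (R : realType) (n : nat).
Implicit Types u v z : 'rV[R]_n.

Lemma dotpE u v : dotp u v = \sum_i u 0 i * v 0 i.
Proof. by rewrite /dotp mxE; apply: eq_bigr => i _; rewrite mxE. Qed.

Lemma dotpC u v : dotp u v = dotp v u.
Proof. by rewrite !dotpE; apply: eq_bigr => i _; rewrite mulrC. Qed.

Lemma dotpBl u v z : dotp (u - v) z = dotp u z - dotp v z.
Proof. by rewrite /dotp mulmxBl !mxE. Qed.

Lemma dotpBr u v z : dotp u (v - z) = dotp u v - dotp u z.
Proof. by rewrite dotpC dotpBl !(dotpC u). Qed.

Lemma dotpZl k u v : dotp (k *: u) v = k * dotp u v.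
Proof. by rewrite /dotp -scalemxAl mxE. Qed.

Lemma dotpZr k u v : dotp u (k *: v) = k * dotp u v.
Proof. by rewrite dotpC dotpZl dotpC. Qed.

Lemma dotp0r u : dotp u 0 = 0.
Proof. by rewrite /dotp linear0 mulmx0 mxE. Qed.

Lemma dotpp_ge0 u : 0 <= dotp u u.
Proof. by rewrite dotpE sumr_ge0 // => i _; rewrite -expr2 sqr_ge0. Qed.

Lemma dotpp_gt0 u : u != 0 -> 0 < dotp u u.
Proof.
move=> u_neq0; rewrite lt_def dotpp_ge0 andbT; apply: contra u_neq0.
rewrite dotpE psumr_eq0 => [/allP u0|i _]; last by rewrite -expr2 sqr_ge0.
apply/eqP/rowP => i; have := u0 i (mem_index_enum _).
by rewrite -expr2 sqrf_eq0 mxE => /eqP.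
Qed.

Lemma dotpp_le_sqr u K : 0 <= K -> norm2 u <= K -> dotp u u <= K ^+ 2.
Proof.
move=> K_ge0 uK; rewrite -(sqr_sqrtr (dotpp_ge0 u)).
by rewrite lerXn2r ?nnegrE ?sqrtr_ge0.
Qed.

End InnerProduct.

Section ONSMatrix.
Variables (R : realType) (n : nat) (eps : R).
Variables (grad : nat -> 'rV[R]_n -> 'rV[R]_n) (w : nat -> 'rV[R]_n).
Hypothesis eps_gt0 : 0 < eps.
Local Notation g s := (grad s (w s)).
Local Notation A := (ONS_A eps grad w).

Lemma ONS_A_sym t : (A t)^T = A t.
Proof.
rewrite /ONS_A linearD /= tr_scalar_mx linear_sum /=; congr (_ + _).
by apply: eq_bigr => s _; rewrite trmx_mul trmxK.
Qed.

Lemma ONS_A0 : A 0 = eps%:M.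
Proof. by rewrite /ONS_A big_geq // addr0. Qed.

Lemma ONS_AS t : A t.+1 = A t + (g t.+1)^T *m g t.+1.
Proof. by rewrite /ONS_A big_nat_recr //= addrA. Qed.

Lemma sqnormA_ONS_A t v :
  sqnormA (A t) v = eps * dotp v v + \sum_(1 <= s < t.+1) dotp v (g s) ^+ 2.
Proof.
rewrite /sqnormA /ONS_A mulmxDr mulmxDl mxE mul_mx_scalar -scalemxAl mxE.
congr (_ + _); rewrite mulmx_sumr mulmx_suml summxE; apply: eq_bigr => s _.
rewrite !mulmxA -mulmxA mxE big_ord1 expr2; congr (_ * _).
by rewrite dotpC.
Qed.

Lemma sqnormA_ONS_AS t v :
  sqnormA (A t.+1) v = sqnormA (A t) v + dotp v (g t.+1) ^+ 2.
Proof. by rewrite !sqnormA_ONS_A big_nat_recr //= addrA. Qed.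

Lemma sqnormA_ONS_A_ge0 t v : 0 <= sqnormA (A t) v.
Proof.
rewrite sqnormA_ONS_A addr_ge0 ?mulr_ge0 ?dotpp_ge0 ?(ltW eps_gt0) //.
by rewrite sumr_ge0 // => s _; rewrite sqr_ge0.
Qed.

Lemma ONS_A_posdef t : posdefmx (A t).
Proof.
move=> v v_neq0; rewrite -/(sqnormA _ _) sqnormA_ONS_A ltr_wpDr ?mulr_gt0 ?dotpp_gt0 //.
by rewrite sumr_ge0 // => s _; rewrite sqr_ge0.
Qed.

Lemma det_ONS_A_gt0 t : 0 < \det (A t).
Proof. by case: (hadamard (ONS_A_sym t) (ONS_A_posdef t)). Qed.

Lemma ONS_A_unit t : A t \in unitmx.
Proof. by rewrite unitmxE unitfE gt_eqF // det_ONS_A_gt0. Qed.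

Lemma ONS_A_diag t i : A t i i = eps + \sum_(1 <= s < t.+1) g s 0 i ^+ 2.
Proof.
rewrite /ONS_A !mxE eqxx mulr1n summxE; congr (_ + _).
by apply: eq_bigr => s _; rewrite mxE big_ord1 !mxE expr2.
Qed.

Lemma invquad_le_lndetD t :
  (g t.+1 *m invmx (A t.+1) *m (g t.+1)^T) 0 0
    <= ln (\det (A t.+1)) - ln (\det (A t)).
Proof.
set q := (_ *m _ *m _) 0 0.
have detE : \det (A t) = \det (A t.+1) * (1 - q).
  have -> : A t = A t.+1 *m (1%:M + - (invmx (A t.+1) *m (g t.+1)^T) *m g t.+1).
    rewrite mulmxDr mulmx1 mulNmx mulmxN !mulmxA mulmxV ?ONS_A_unit // mul1mx.
    by rewrite ONS_AS addrK.
  by rewrite det_mulmx det_1_add_mul mulmxN mxE mulmxA.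
have q_lt1 : 0 < 1 - q.
  by have := det_ONS_A_gt0 t; rewrite detE pmulr_rgt0 // det_ONS_A_gt0.
rewrite detE lnM ?posrE ?det_ONS_A_gt0 //.
have := le_ln1Dx (_ : -1 < - q); lra.
Qed.

Lemma lndet_ONS_A_le t : (0 < n)%N ->
  ln (\det (A t)) - ln (\det (A 0))
    <= n%:R * ln (1 + (\sum_(1 <= s < t.+1) dotp (g s) (g s)) / (n%:R * eps)).
Proof.
move=> n_gt0; set S := \sum_(_ <= s < _) _.
have n_gt0R : 0 < n%:R :> R by rewrite ltr0n.
have S_ge0 : 0 <= S by rewrite sumr_ge0 // => s _; exact: dotpp_ge0.
have r_gt0 : 0 < 1 + S / (n%:R * eps) by rewrite ltr_pwDl // divr_ge0 // ltW // mulr_gt0.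
have [_ det_le] := hadamard (ONS_A_sym t) (ONS_A_posdef t).
have [AGM _] := leif_AGM (A := predT) (E := fun i => A t i i)
  (fun i _ => ltW (posdefmx_diag_gt0 i (ONS_A_posdef t))).
rewrite cardT size_enum_ord in AGM.
have meanE : (\sum_(i in predT) A t i i) / n%:R = eps * (1 + S / (n%:R * eps)).
  under eq_bigr do rewrite ONS_A_diag.
  rewrite big_split /= sumr_const cardT size_enum_ord exchange_big /=.
  have -> : \sum_(1 <= s < t.+1) \sum_(i in predT) g s 0 i ^+ 2 = S.
    by apply: eq_bigr => s _; rewrite dotpE; apply: eq_bigr => i _; rewrite expr2.
  by field; rewrite !gt_eqF.
rewrite meanE in AGM.
have mean_gt0 : 0 < eps * (1 + S / (n%:R * eps)) by rewrite mulr_gt0.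
have := le_trans det_le AGM; rewrite -ler_ln ?posrE ?exprn_gt0 ?det_ONS_A_gt0 //.
rewrite ONS_A0 det_scalar (lnXn n eps_gt0) (lnXn n mean_gt0).
have -> : ln (eps * (1 + S / (n%:R * eps))) = ln eps + ln (1 + S / (n%:R * eps)).
  by rewrite lnM ?posrE.
by rewrite mulr_natl mulrnDl; lra.
Qed.

Lemma elliptical_potential T : (0 < n)%N ->
  \sum_(1 <= t < T.+1) (g t *m invmx (A t) *m (g t)^T) 0 0
    <= n%:R * ln (1 + (\sum_(1 <= t < T.+1) dotp (g t) (g t)) / (n%:R * eps)).
Proof.
move=> n_gt0; apply: le_trans (lndet_ONS_A_le T n_gt0).
elim: T => [|T IHT]; first by rewrite big_geq // subrr.
by rewrite big_nat_recr //=; have := invquad_le_lndetD T; lra.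
Qed.

End ONSMatrix.

Section Projection.
Variables (R : realType) (n : nat) (A : 'M[R]_n).
Hypothesis symA : A^T = A.
Implicit Types x y z v : 'rV[R]_n.

Let form x z := (x *m A *m z^T) 0 0.

Lemma formC x z : form z x = form x z.
Proof.
rewrite /form; have -> : z *m A *m x^T = (x *m A *m z^T)^T.
  by rewrite !trmx_mul trmxK symA mulmxA.
by rewrite mxE.
Qed.

Lemma sqnormA_subZ x z l :
  sqnormA A (x - l *: z) = sqnormA A x - 2 * l * form x z + l ^+ 2 * sqnormA A z.
Proof.
have := formC x z; rewrite /form /sqnormA.
have -> : (x - l *: z)^T = x^T - l *: z^T by rewrite linearB linearZ.
rewrite !(mulmxBl, mulmxBr) -!scalemxAl -!scalemxAr !mxE => ->; ring.
Qed.

Lemma sqnormA_sub_newton x z c : A \in unitmx ->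
  sqnormA A (x - c *: (z *m invmx A))
    = sqnormA A x - 2 * c * dotp x z + c ^+ 2 * (z *m invmx A *m z^T) 0 0.
Proof.
move=> unitA; have symAV : (invmx A)^T = invmx A by rewrite trmx_inv symA.
rewrite sqnormA_subZ /form /sqnormA trmx_mul symAV.
by rewrite mulmxKV // !mulmxA mulmxK.
Qed.

Lemma newton_step_le x z gamma P : A \in unitmx -> 0 < gamma ->
  P <= sqnormA A (x - gamma^-1 *: (z *m invmx A)) ->
  2 * dotp x z <= gamma * (sqnormA A x - P) + gamma^-1 * (z *m invmx A *m z^T) 0 0.
Proof.
move=> unitA gamma_gt0; rewrite sqnormA_sub_newton // => P_le.
have := ler_wpM2l (ltW gamma_gt0) P_le.
have -> : forall a b c, gamma * (a - 2 * gamma^-1 * b + gamma^-1 ^+ 2 * c)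
    = gamma * a - 2 * b + gamma^-1 * c.
  by move=> a b c; field; rewrite gt_eqF.
rewrite mulrBr; lra.
Qed.

Hypothesis psdA : forall v, 0 <= sqnormA A v.
Variable W : set 'rV[R]_n.
Hypothesis convW : convex_set (W : set (convex_lmodType 'rV[R]_n)).

Lemma convex_set_comb x z l :
  0 <= l -> l <= 1 -> W x -> W z -> W (l *: x + (1 - l) *: z).
Proof.
move=> l_ge0 l_le1 Wx Wz.
by have := convW (Itv01 l_ge0 l_le1) (mem_set Wx) (mem_set Wz); rewrite inE.
Qed.

Variables (y p : 'rV[R]_n).
Hypotheses (Wp : W p) (p_min : forall v, W v -> sqnormA A (y - p) <= sqnormA A (y - v)).

Lemma proj_first_order v : W v -> form (y - p) (v - p) <= 0.
Proof.
move=> Wv; set e := y - p; set d := v - p; set b := form e d.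
have along_segment l : 0 < l <= 1 -> 2 * b <= l * sqnormA A d.
  case/andP=> l_gt0 l_le1; have := p_min (convex_set_comb (ltW l_gt0) l_le1 Wv Wp).
  have -> : y - (l *: v + (1 - l) *: p) = e - l *: d.
    by apply/rowP => i; rewrite !mxE; ring.
  rewrite sqnormA_subZ -/b => h.
  by rewrite -(ler_pM2l l_gt0) mulrA [l * 2]mulrC; nra.
rewrite leNgt; apply/negP => b_gt0; have Q_ge0 := psdA d.
have bQ_gt0 : 0 < b + sqnormA A d by lra.
have := along_segment (b / (b + sqnormA A d)).
rewrite divr_gt0 // ler_pdivrMr // mul1r lerDl Q_ge0 => /(_ isT).
rewrite mulrAC ler_pdivlMr //; nra.
Qed.

Lemma sqnormA_proj_le v : W v -> sqnormA A (p - v) <= sqnormA A (y - v).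
Proof.
move=> Wv; have := proj_first_order Wv; have := psdA (y - p).
have -> : y - v = (y - p) - 1 *: (v - p) by rewrite scale1r opprB addrA subrK.
have -> : p - v = 0 - 1 *: (v - p) by rewrite scale1r add0r opprB.
rewrite !sqnormA_subZ /form /sqnormA !mul0mx !mxE; lra.
Qed.

End Projection.

Section ONSRegret.
Variables (R : realType) (n : nat) (W : set 'rV[R]_n) (Wd gamma : R).
Variables (grad : nat -> 'rV[R]_n -> 'rV[R]_n) (T : nat) (w : nat -> 'rV[R]_n).
Variable u : 'rV[R]_n.
Hypotheses (n_gt0 : (0 < n)%N) (Wd_gt0 : 0 < Wd) (gamma_gt0 : 0 < gamma).
Hypotheses (convW : convex_set (W : set (convex_lmodType 'rV[R]_n))) (diamW : diam_le W Wd).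
Hypotheses (ONSw : is_ONS W Wd gamma grad T w) (Wu : W u).

Let eps := n%:R / (Wd ^+ 2 * gamma ^+ 2).
Let eps_gt0 : 0 < eps. Proof. by rewrite divr_gt0 ?ltr0n ?mulr_gt0 ?exprn_gt0. Qed.
Local Notation g t := (grad t (w t)).
Local Notation A := (ONS_A eps grad w).

(* The run only defines w up to T, hence the convention F (T + 1) = 0. *)
Let F t := if (t.-1 < T)%N then sqnormA (A t.-1) (w t - u) else 0.

Lemma ONS_round t : (1 <= t < T.+1)%N ->
  2 * dotp (w t - u) (g t) <= gamma * (F t - F t.+1)
    + gamma * dotp (w t - u) (g t) ^+ 2 + gamma^-1 * (g t *m invmx (A t) *m (g t)^T) 0 0.
Proof.
case: t => // t /andP[_]; rewrite ltnS => tT.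
have symA := ONS_A_sym eps grad w t.+1.
have next_le : F t.+2
    <= sqnormA (A t.+1) (w t.+1 - u - gamma^-1 *: (g t.+1 *m invmx (A t.+1))).
  rewrite /F /=; case: ltnP => [t1T|_]; last exact: sqnormA_ONS_A_ge0.
  have [_ /(_ t.+1 t1T) [Wnext p_min]] := ONSw.
  have := sqnormA_proj_le symA (sqnormA_ONS_A_ge0 grad w eps_gt0 t.+1) convW Wnext p_min Wu.
  by rewrite addrAC.
have := newton_step_le symA (ONS_A_unit grad w eps_gt0 t.+1) gamma_gt0 next_le.
rewrite sqnormA_ONS_AS {2}/F /= tT; lra.
Qed.

Lemma ONS_regret :
  \sum_(1 <= t < T.+1) 2 * dotp (w t - u) (g t)
    <= n%:R / gamma + gamma * \sum_(1 <= t < T.+1) dotp (w t - u) (g t) ^+ 2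
       + n%:R / gamma * ln (1 + (\sum_(1 <= t < T.+1) dotp (g t) (g t)) / (n%:R * eps)).
Proof.
have := ler_sum_nat ONS_round; rewrite !big_split /= -!mulr_sumr.
have -> : \sum_(1 <= t < T.+1) (F t - F t.+1) = F 1 - F T.+1.
  by rewrite -opprB -telescope_sumr // -sumrN; apply: eq_bigr => t _; rewrite opprB.
have F1_le : F 1 <= eps * Wd ^+ 2.
  rewrite /F /=; case: ifP => _; last by rewrite mulr_ge0 ?sqr_ge0 ?ltW.
  rewrite sqnormA_ONS_A big_geq // addr0 ler_pM2l //.
  by apply: dotpp_le_sqr; [exact: ltW | apply: diamW => //; case: ONSw].
have FT : F T.+1 = 0 by rewrite /F /= ltnn.
have potential := elliptical_potential grad w eps_gt0 T n_gt0.
have gamma_eps : gamma * (eps * Wd ^+ 2) = n%:R / gamma.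
  by rewrite /eps; field; rewrite !gt_eqF.
have := ler_wpM2l (ltW gamma_gt0) F1_le; rewrite gamma_eps => F1_term.
have gammaV_ge0 : 0 <= gamma^-1 by rewrite invr_ge0 ltW.
have := ler_wpM2l gammaV_ge0 potential; rewrite mulrA [gamma^-1 * _]mulrC => pot_term.
rewrite FT subr0; lra.
Qed.

Lemma ONS_regret_bounded_grad G : 0 <= G ->
  (forall t, (1 <= t < T.+1)%N -> dotp (g t) (g t) <= G ^+ 2) ->
  \sum_(1 <= t < T.+1) 2 * dotp (w t - u) (g t)
    <= n%:R / gamma + gamma * \sum_(1 <= t < T.+1) dotp (w t - u) (g t) ^+ 2
       + n%:R / gamma * ln (1 + T%:R * G ^+ 2 * (Wd * gamma / n%:R) ^+ 2).
Proof.
move=> G_ge0 g_le; apply: le_trans ONS_regret _.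
rewrite lerD2l; apply: ler_wpM2l; first by rewrite divr_ge0 ?ler0n ?ltW.
have sum_le : \sum_(1 <= t < T.+1) dotp (g t) (g t) <= T%:R * G ^+ 2.
  have -> : T%:R * G ^+ 2 = \sum_(1 <= t < T.+1) G ^+ 2.
    by rewrite sumr_const_nat subn1 mulr_natl.
  exact: ler_sum_nat.
have sum_ge0 : 0 <= \sum_(1 <= t < T.+1) dotp (g t) (g t).
  by rewrite sumr_ge0 // => t _; exact: dotpp_ge0.
have -> : T%:R * G ^+ 2 * (Wd * gamma / n%:R) ^+ 2 = T%:R * G ^+ 2 / (n%:R * eps).
  by rewrite /eps; field; rewrite !gt_eqF ?ltr0n.
have neps_gt0 : 0 < n%:R * eps by rewrite mulr_gt0 ?ltr0n.
rewrite ler_ln ?posrE ?lerD2l ?ler_pM2r ?invr_gt0 //.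
  by apply/(ltr_pwDl ltr01)/divr_ge0/ltW.
by apply/(ltr_pwDl ltr01)/divr_ge0/ltW/neps_gt0; rewrite mulr_ge0 ?sqr_ge0.
Qed.

End ONSRegret.

Section Argmax.
Variables (R : realType) (n : nat) (X : set 'rV[R]_n).

Lemma argmax_regret_ge0 c x x' : is_argmax X c x -> X x' -> 0 <= dotp c (x - x').
Proof. by case=> _ x_max /x_max; rewrite dotpBr subr_ge0. Qed.

Lemma argmax_surrogate_bounds c c' x x' : is_argmax X c x -> is_argmax X c' x' ->
  0 <= dotp c (x - x') <= dotp (c' - c) (x' - x).
Proof.
move=> x_opt x'_opt; have [Xx _] := x_opt; have [Xx' _] := x'_opt.
rewrite (argmax_regret_ge0 x_opt Xx') /=.
by have := argmax_regret_ge0 x'_opt Xx; rewrite dotpBl !dotpBr; lra.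
Qed.

End Argmax.

Lemma grad_loss_eta_at (R : realType) n (eta : R) (c xh x : 'rV[R]_n) :
  grad_loss_eta eta c xh x c = eta *: (xh - x).
Proof. by rewrite /grad_loss_eta subrr dotp0r !mulr0 subr0 mulr1. Qed.

Lemma grad_loss_eta_at_sqr_le (R : realType) n (eta K : R) (c xh x : 'rV[R]_n) :
  0 <= K -> norm2 (xh - x) <= K ->
  let g := grad_loss_eta eta c xh x c in dotp g g <= (eta * K) ^+ 2.
Proof.
move=> K_ge0 dist_le /=; rewrite grad_loss_eta_at dotpZl dotpZr mulrA -expr2 exprMn.
by rewrite ler_wpM2l ?sqr_ge0 ?dotpp_le_sqr.
Qed.

Lemma ln_ge_half (R : realType) (z : R) : 2 <= z -> 2^-1 <= ln z.
Proof.
move=> z_ge2; have := le_ln1Dx (_ : -1 < - 2^-1 :> R).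
rewrite (_ : 1 - 2^-1 = 2^-1 :> R); last by field.
rewrite lnV ?posrE // => /(_ ltac:(lra)) ln2_ge.
have : ln 2 <= ln z by rewrite ler_ln ?posrE //; lra.
lra.
Qed.

Lemma ln1Dsqr_le (R : realType) (z : R) : 2 <= z -> ln (1 + z ^+ 2) <= 3 * ln z.
Proof.
move=> z_ge2; have z_gt0 : 0 < z by lra.
rewrite -[3]/(3%:R) mulr_natl -lnXn // ler_ln ?posrE ?exprn_gt0 ?ltr_pwDl ?sqr_ge0 //.
by rewrite (exprS z 2); nra.
Qed.

Lemma ONS_log_arg_le (R : realFieldType) (n T : nat) (D K B gamma : R) :
  (0 < n)%N -> (0 < T)%N -> 0 < B -> gamma ^+ 2 <= 1 ->
  T%:R * ((5 * B)^-1 * K) ^+ 2 * (D * gamma / n%:R) ^+ 2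
    <= (D * K * T%:R / (B * n%:R)) ^+ 2.
Proof.
move=> n_gt0 T_gt0 B_gt0 gamma_le1; have T_ge1 : 1 <= T%:R :> R by rewrite ler1n.
have -> : T%:R * ((5 * B)^-1 * K) ^+ 2 * (D * gamma / n%:R) ^+ 2
    = gamma ^+ 2 / (25 * T%:R) * (D * K * T%:R / (B * n%:R)) ^+ 2.
  by field; rewrite !gt_eqF ?ltr0n //; lra.
rewrite ler_piMl ?sqr_ge0 // ler_pdivrMr; lra.
Qed.

Lemma sum_sqr_le_bound (R : realDomainType) (m k : nat) (a : nat -> R) (B : R) :
  (forall t, (m <= t < k)%N -> 0 <= a t <= B) ->
  \sum_(m <= t < k) a t ^+ 2 <= B * \sum_(m <= t < k) a t.
Proof.
move=> a_bounds; rewrite mulr_sumr; apply: ler_sum_nat => t /a_bounds/andP[a_ge0 a_le].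
by rewrite expr2 ler_wpM2r.
Qed.

Lemma ONS_surrogate_arith (R : realFieldType) (B N S S2 L lz : R) :
  0 < B -> 0 <= N -> S2 <= B * S -> L <= 3 * lz -> 2^-1 <= lz ->
  2 * ((5 * B)^-1 * S) <= N / (25 / 49) + 25 / 49 * ((5 * B)^-1 ^+ 2 * S2)
                          + N / (25 / 49) * L ->
  S <= 26 * (B * N * lz).
Proof.
(* 2 - (25/49)/5 = 93/49 and 1 + 3 lz <= 5 lz give S <= 49^2/93 B N lz < 26 B N lz. *)
move=> B_gt0 N_ge0 S2_le L_le lz_ge; set E := (5 * B)^-1 * S => bound.
have S2_term : 25 / 49 * ((5 * B)^-1 ^+ 2 * S2) <= 5 / 49 * E.
  rewrite mulrA (_ : 5 / 49 * E = 25 / 49 * (5 * B)^-1 ^+ 2 * (B * S)).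
    by rewrite ler_wpM2l // mulr_ge0 // exprn_ge0 // invr_ge0 ltW // mulr_gt0.
  by rewrite /E; field; rewrite gt_eqF.
have L_term : N / (25 / 49) * L <= 49 / 25 * 3 * (N * lz).
  have -> : 49 / 25 * 3 * (N * lz) = N / (25 / 49) * (3 * lz) by field.
  by rewrite ler_wpM2l // divr_ge0.
have N_term : N * 2^-1 <= N * lz by rewrite ler_wpM2l.
rewrite (_ : S = B * (5 * E)); last by rewrite /E; field; rewrite gt_eqF.
rewrite (_ : 26 * (B * N * lz) = B * (26 * (N * lz))); last by ring.
rewrite ler_pM2l //; lra.
Qed.

Local Open Scope classical_set_scope.

Theorem theorem1 :
  exists C : nat, forall (R : realType) (n T : nat)
    (Theta : set 'rV[R]_n) (cstar : 'rV[R]_n) (X : nat -> set 'rV[R]_n)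
    (x xhat chat : nat -> 'rV[R]_n) (D K B : R),
    (0 < n)%N -> (0 < T)%N ->
    closed Theta -> convex_set (Theta : set (convex_lmodType 'rV[R]_n)) ->
    Theta cstar ->
    (forall t, (1 <= t <= T)%N -> X t !=set0 /\ compact (X t)) ->
    (forall t, (1 <= t <= T)%N -> is_argmax (X t) cstar (x t)) ->
    0 < D -> diam_le Theta D ->
    0 < K -> (forall t, (1 <= t <= T)%N -> diam_le (X t) K) ->
    0 < B ->
    (forall t, (1 <= t <= T)%N -> forall c c' y y',
       Theta c -> Theta c' -> X t y -> X t y' -> dotp (c - c') (y - y') <= B) ->
    2 <= D * K * T%:R / (B * n%:R) ->
    let eta := (5 * B)^-1 in
    let gamma := ((1 + 2 * eta * B) ^+ 2)^-1 in
    (forall t, (1 <= t <= T)%N -> Theta (chat t)) ->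
    (forall t, (1 <= t <= T)%N -> is_argmax (X t) (chat t) (xhat t)) ->
    is_ONS Theta D gamma
      (fun t => grad_loss_eta eta (chat t) (xhat t) (x t)) T chat ->
    \sum_(1 <= t < T.+1) dotp cstar (x t - xhat t)
      <= \sum_(1 <= t < T.+1) dotp (chat t - cstar) (xhat t - x t)
    /\ \sum_(1 <= t < T.+1) dotp (chat t - cstar) (xhat t - x t)
      <= C%:R * (B * n%:R * ln (D * K * T%:R / (B * n%:R))).
Proof.
(* Closedness, compactness and non-emptiness only ensure that the ONS projections and the
   maximizers exist; here they are given. *)
exists 26%N => R n T Theta cstar X x xhat chat D K B n_gt0 T_gt0 _ convTheta
  Theta_cstar _ x_opt D_gt0 diamTheta K_gt0 diamX B_gt0 B_bound z_ge2 eta gamma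
  Theta_chat xhat_opt ONS_chat.
set r := fun t => dotp (chat t - cstar) (xhat t - x t).
have r_bounds t : (1 <= t < T.+1)%N -> dotp cstar (x t - xhat t) <= r t /\ 0 <= r t <= B.
  rewrite ltnS => tT; have [Xx _] := x_opt t tT; have [Xxhat _] := xhat_opt t tT.
  have /andP[regret_ge0 regret_le] := argmax_surrogate_bounds (x_opt t tT) (xhat_opt t tT).
  have r_le := B_bound t tT _ _ _ _ (Theta_chat t tT) Theta_cstar Xxhat Xx.
  by rewrite regret_le (le_trans regret_ge0 regret_le) r_le.
split; first by apply: ler_sum_nat => t /r_bounds[].
have etaB : eta * B = 5^-1 by rewrite /eta invfM mulfVK ?gt_eqF.
have gammaE : gamma = 25 / 49 by rewrite /gamma -mulrA etaB; field.
have gamma_gt0 : 0 < gamma by rewrite gammaE.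
have grad_le t : (1 <= t < T.+1)%N ->
    let g := grad_loss_eta eta (chat t) (xhat t) (x t) (chat t) in dotp g g <= (eta * K) ^+ 2.
  rewrite ltnS => tT; have [Xx _] := x_opt t tT; have [Xxhat _] := xhat_opt t tT.
  exact: grad_loss_eta_at_sqr_le (ltW K_gt0) (diamX t tT _ _ Xxhat Xx).
have etaK_ge0 : 0 <= eta * K by rewrite mulr_ge0 ?invr_ge0 ?mulr_ge0 ?ltW.
have := ONS_regret_bounded_grad n_gt0 D_gt0 gamma_gt0 convTheta diamTheta ONS_chat
  Theta_cstar etaK_ge0 grad_le.
rewrite /=; under eq_bigr do rewrite grad_loss_eta_at dotpZr.
under [X in _ <= _ + _ * X + _]eq_bigr do rewrite grad_loss_eta_at dotpZr exprMn.
rewrite -!mulr_sumr -/r => regret.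
have ln_le : ln (1 + T%:R * (eta * K) ^+ 2 * (D * gamma / n%:R) ^+ 2)
    <= 3 * ln (D * K * T%:R / (B * n%:R)).
  apply: le_trans (ln1Dsqr_le z_ge2).
  rewrite ler_ln ?posrE ?lerD2l ?ONS_log_arg_le ?gammaE //; first lra.
    by apply/(ltr_pwDl ltr01)/mulr_ge0/sqr_ge0/mulr_ge0/sqr_ge0.
  by apply/(ltr_pwDl ltr01)/sqr_ge0.
apply: (ONS_surrogate_arith B_gt0 (ler0n _ _) _ ln_le (ln_ge_half z_ge2)).
  by apply: sum_sqr_le_bound => t /r_bounds[].
by rewrite -gammaE; exact: regret.
Qed.
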